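(* Let $G$ be a finite group and $H$ a normal subgroup of $G$ such that $G/H$ is cyclic. Suppose that the coset $Hx$ generates the quotient group $G/H$. Then the number of $G$-conjugacy classes contained in $Hx$ equals the number of integral $(G,H)$-classes contained in $H$.
   Context: For $g\in G$, the centralizing subgroup of $g$ with respect to $H$ is $HC_G(g)$; for a conjugacy class $X$ of $G$ it is $HC_G(g)$ for any $g\in X$. An integral $(G,H)$-class is a conjugacy class of $G$ whose centralizing subgroup with respect to $H$ is $G$ (equivalently, a $G$-class which does not split into several classes when the conjugation action is restricted to $H$). *)

From mathcomp Require Import all_boot all_fingroup all_solvable.
Set Implicit Arguments. Unset Strict Implicit. Unset Printing Implicit Defensive.
Local Open Scope group_scope.

Definition centralizing_subgroup (gT : finGroupType) (G H : {set gT}) (g : gT)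
  : {set gT} := H * 'C_G[g].

(* centralizing subgroup of a conjugacy class X : H C_G(g) for g \in X
   (we take the canonical representative repr X; independent of choice) *)
Definition class_centralizing_subgroup (gT : finGroupType) (G H X : {set gT})
  : {set gT} := centralizing_subgroup G H (repr X).

Definition integral_class (gT : finGroupType) (G H X : {set gT}) : bool :=
  (X \in classes G) && (class_centralizing_subgroup G H X == G).

From mathcomp Require Import all_boot all_fingroup all_solvable.
Set Implicit Arguments. Unset Strict Implicit. Unset Printing Implicit Defensive.
Local Open Scope group_scope.

(* Burnside's count: for a G-stable set B, |G| times the number of G-classes
   in B is the sum of |C_G(a)| over a in B.  When H C_G(a) = G, which holds for
   a in Hx and for a in an integral class, C_G(a) maps onto G/H and
   |C_G(a)| = |G/H| |C_H(a)|.  Counting commuting pairs (a, b) with a in Hx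
   and b in H the other way round, |C_Hx(b)| is |C_H(b)| if C_G(b) meets Hx,
   i.e. if H C_G(b) = G because Hx generates G/H, and 0 otherwise. *)

Section Counting.

Variable gT : finGroupType.
Implicit Types (G H : {group gT}) (A B : {set gT}) (a b c x : gT).

Lemma card_classes_sub_mul G B :
    B \subset G -> {in B & G, forall a g, a ^ g \in B} ->
  (#|[set C in classes G | C \subset B]| * #|G|)%N = \sum_(a in B) #|'C_G[a]|.
Proof.
move=> sBG BJ; set cB := [set C in classes G | C \subset B].
rewrite (partition_big (class^~ G) [in cB]) /=; last first.
  move=> a Ba; rewrite inE mem_classes ?(subsetP sBG) //=.
  by apply/subsetP => _ /imsetP[g Gg ->]; apply: BJ.
rewrite -sum_nat_const; apply: eq_bigr => C.
rewrite inE => /andP[/imsetP[b Gb ->] sbGB].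
rewrite (eq_bigl [in b ^: G]); last first.
  move=> a /=; apply/andP/idP => [[_ /eqP <-]|abG]; first exact: class_refl.
  by split; [apply: (subsetP sbGB) | apply/eqP/class_eqP].
rewrite (eq_bigr (fun=> #|'C_G[b]|)); last first.
  by move=> _ /imsetP[g Gg ->]; rewrite cent1J -{1}(conjGid Gg) -conjIg cardJg.
by rewrite sum_nat_const -index_cent1 mulnC Lagrange ?subsetIl.
Qed.

Lemma card_setI_sum A B : #|A :&: B| = \sum_(b in A) (b \in B).
Proof.
rewrite -sum1_card big_mkcond [RHS]big_mkcond; apply: eq_bigr => b _.
by rewrite inE; case: (b \in A); case: (b \in B).
Qed.

Lemma sum_card_cent1C A B :
  \sum_(a in A) #|'C_B[a]| = \sum_(b in B) #|'C_A[b]|.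
Proof.
rewrite (eq_bigr _ (fun a _ => card_setI_sum B 'C[a])) exchange_big /=.
apply: eq_bigr => b _; rewrite card_setI_sum; apply: eq_bigr => a _.
by rewrite cent1C.
Qed.

Lemma rcoset_cent1 A b c : c \in 'C[b] -> 'C_(A :* c)[b] = 'C_A[b] :* c.
Proof.
move=> Cc; apply/setP => y.
by rewrite mem_rcoset !in_setI mem_rcoset (groupMr _ (groupVr Cc)).
Qed.

Lemma card_cent1_rcoset H b x :
  'C_(H :* x)[b] != set0 -> #|'C_(H :* x)[b]| = #|'C_H[b]|.
Proof.
case/set0Pn => c /setIP[/rcoset_eqP Hxc Cc].
by rewrite -Hxc rcoset_cent1 ?card_rcoset.
Qed.

Lemma card_cent1_quotient G H a :
    H <| G -> H * 'C_G[a] = G ->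
  #|'C_G[a]| = (#|G / H| * #|'C_H[a]|)%N.
Proof.
case/andP=> sHG nHG defG.
have nHC: 'C_G[a] \subset 'N(H) by rewrite subIset ?nHG.
have ->: G / H = 'C_G[a] / H by rewrite -{1}defG quotientMidl.
rewrite card_quotient // mulnC.
by rewrite -[LHS](LagrangeI [group of 'C_G[a]] H) setIC setIA (setIidPl sHG).
Qed.

Lemma mulg_cent1J G H a g :
  H <| G -> g \in G -> (H * 'C_G[a ^ g] == G) = (H * 'C_G[a] == G).
Proof.
case/normalP=> _ nHG Gg.
rewrite cent1J -{1}(conjGid Gg) -conjIg -{1}(nHG g Gg) -conjsMg.
by rewrite -{2}(conjGid Gg) (inj_eq (@conjsg_inj _ g)).
Qed.

Definition integral_set G H := [set a in H | H * 'C_G[a] == G].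

Lemma integral_class_classE G H b :
  H <| G -> b \in G -> integral_class G H (b ^: G) = (H * 'C_G[b] == G).
Proof.
move=> nsHG Gb; rewrite /integral_class mem_classes //=.
rewrite /class_centralizing_subgroup /centralizing_subgroup.
by have /imsetP[g Gg ->] := mem_repr_classes (mem_classes Gb); apply: mulg_cent1J.
Qed.

Lemma integral_classesE G H :
    H <| G ->
  [set C in classes G | integral_class G H C && (C \subset H)] =
  [set C in classes G | C \subset integral_set G H].
Proof.
move=> nsHG; apply/setP => C; rewrite !inE.
case CG: (C \in classes G) => //=; case/imsetP: CG => b Gb ->.
rewrite integral_class_classE //.
apply/andP/subsetP => [[intb sbGH] _ /imsetP[g Gg ->] | sbGS].
  by rewrite inE mulg_cent1J // intb andbT (subsetP sbGH) ?imset_f.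
have /setIdP[_ intb] := sbGS b (class_refl G b).
by split=> //; apply/subsetP => a /sbGS /setIdP[].
Qed.

End Counting.

Section GeneratingCoset.

Variables (gT : finGroupType) (G H : {group gT}) (x : gT).
Hypotheses (nsHG : H <| G) (Gx : x \in G) (genGH : generator (G / H) (coset H x)).

Let sHG : H \subset G := normal_sub nsHG.
Let nHG : G \subset 'N(H) := normal_norm nsHG.

Lemma rcoset_generator_sub : H :* x \subset G.
Proof. by rewrite mul_subG ?sub1set. Qed.

Lemma mulg_generator_eq (K : {group gT}) :
  K \subset G -> (H * K == G) = (K :&: H :* x != set0).
Proof.
move=> sKG; have nHK := subset_trans sKG nHG.
rewrite eqEsubset mul_subG //= -(quotientK nHK) -sub_morphim_pre //.
rewrite -[_ @* G]/(G / H) (eqP genGH) cycle_subG; have Nx := subsetP nHG x Gx.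
apply/idP/set0Pn => [/morphimP[c Nc Kc cx] | [c /setIP[Kc Hxc]]].
  by exists c; rewrite inE Kc; apply/rcoset_kercosetP.
by rewrite -(rcoset_kercosetP (subsetP nHK c Kc) Nx Hxc) mem_quotient.
Qed.

Lemma mulg_cent1_generator a : (H * 'C_G[a] == G) = ('C_(H :* x)[a] != set0).
Proof.
rewrite mulg_generator_eq ?subsetIl // setIC setIA.
by rewrite (setIidPl rcoset_generator_sub).
Qed.

Lemma rcoset_generator_conj : {in H :* x & G, forall a g, a ^ g \in H :* x}.
Proof.
have abGH : abelian (G / H) by rewrite (eqP genGH) cycle_abelian.
move=> a g Hxa Gg; have Ga := subsetP rcoset_generator_sub a Hxa.
have [[Na Ng] Nx] := (subsetP nHG a Ga, subsetP nHG g Gg, subsetP nHG x Gx).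
apply/(rcoset_kercosetP (groupJ Na Ng) Nx); rewrite morphJ //=.
rewrite (rcoset_kercosetP Na Nx Hxa) /conjg.
by rewrite (centsP abGH (coset H x)) ?mem_quotient ?mulKg.
Qed.

Lemma sum_card_cent1_rcoset :
  \sum_(a in H :* x) #|'C_H[a]| = \sum_(a in integral_set G H) #|'C_H[a]|.
Proof.
rewrite sum_card_cent1C (bigID [in integral_set G H]) /= [X in _ + X]big1 ?addn0; last first.
  move=> b /andP[Hb]; rewrite inE Hb mulg_cent1_generator negbK.
  by move/eqP->; rewrite cards0.
apply: eq_big => [b | b /andP[_]]; first by rewrite andb_idl // => /setIdP[].
by rewrite inE => /andP[_]; rewrite mulg_cent1_generator => /card_cent1_rcoset.
Qed.

End GeneratingCoset.

Theorem lemma2p2 (gT : finGroupType) (G H : {group gT}) (x : gT) :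
  H <| G -> cyclic (G / H) -> x \in G -> generator (G / H) (coset H x) ->
  #|[set C in classes G | C \subset H :* x]| =
  #|[set C in classes G | integral_class G H C && (C \subset H)]|.
Proof.
move=> nsHG _ Gx genGH; have sHG := normal_sub nsHG.
have sHxG := rcoset_generator_sub nsHG Gx.
have sSG : integral_set G H \subset G.
  by apply/subsetP => a /setIdP[/(subsetP sHG)].
apply/eqP; rewrite -(eqn_pmul2r (cardG_gt0 G)) integral_classesE //.
rewrite !card_classes_sub_mul //; last 2 first.
- move=> a g /setIdP[Ha inta] Gg.
  by rewrite inE memJ_norm ?mulg_cent1J ?Ha ?(subsetP (normal_norm nsHG)).
- exact: (rcoset_generator_conj nsHG Gx genGH).
apply/eqP; rewrite (eq_bigr (fun a => #|G / H| * #|'C_H[a]|)%N) => [|a Hxa]; last first.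
  apply: (card_cent1_quotient nsHG); apply/eqP.
  rewrite (mulg_cent1_generator nsHG Gx genGH); apply/set0Pn.
  by exists a; rewrite inE Hxa cent1id.
rewrite [RHS](eq_bigr (fun a => #|G / H| * #|'C_H[a]|)%N) => [|a /setIdP[_ /eqP]].
  by rewrite -!big_distrr (sum_card_cent1_rcoset nsHG Gx genGH).
exact: card_cent1_quotient.
Qed.
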